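(* For every $n\ge1$, \[S_{1,0}(2n)=0,\qquad S_{1,0}(2n-1)=\frac{B_{2n}}{n},\qquad S_{2,0}(2n)=-\frac{B_{2n}}{2n}.\]
   Context: $B_m$ denotes the $m$-th Bernoulli number ($B_2=\tfrac16$, $B_4=-\tfrac1{30}$, ...). Let $a_0,a_1,\dots$ be indeterminates and $a(x)=\sum_{i\ge0}a_ix^i$. For a positive integer $j$ set $G(x)=\prod_{i=0}^{j-1}\frac{1+a(x)x^2}{1+ix}$, $H(x)=\prod_{i=1-j}^{-1}\frac{1+ix}{1+a(x)x^2}$, $u=2j-1$, $v=j(j-1)$. For each $n\ge1$ there are unique polynomials $S_0(n),\dots,S_n(n)\in\mathbb{Q}[a_0,\dots,a_{n-2}]$, independent of $j$, such that for every positive integer $j$ the coefficient of $x^{n-1}$ in $\frac{G(x)-H(x)}{x^2}(1+a(x)x^2)$ equals $u\big(a_{n-1}+S_0(n)+\sum_{i=1}^nS_i(n)v^i\big)$. For $1\le i\le n$, $S_{i,0}(n)\in\mathbb{Q}$ denotes the constant term of $S_i(n)$. *)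

From HB Require Import structures.
From mathcomp Require Import all_boot all_order all_algebra.
From mathcomp Require Import mpoly.
Set Implicit Arguments. Unset Strict Implicit. Unset Printing Implicit Defensive.
Import Order.TTheory GRing.Theory Num.Theory.
Local Open Scope ring_scope.

(* Bernoulli numbers, convention B_0 = 1, B_1 = -1/2, B_2 = 1/6, B_4 = -1/30:
   B_m = - 1/(m+1) * \sum_{k<m} C(m+1,k) B_k  for m >= 1. *)
Fixpoint bern_upto (m : nat) : seq rat :=
  match m with
  | 0 => [:: 1]
  | m'.+1 =>
      let s := bern_upto m' in
      rcons s (- (\sum_(k < m'.+1) ('C(m'.+2, k))%:R * nth 0 s k) / (m'.+2)%:R)
  end.

Definition bernoulli (m : nat) : rat := nth 0 (bern_upto m) m.

(* Inverse of a formal power series p with p`_0 = 1, modulo x^(N+1):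
   1/p = 1/(1 - (1-p)) = \sum_k (1-p)^k, and (1-p)^k = O(x^k). *)
Definition trunc_inv (R : comNzRingType) (N : nat) (p : {poly R}) : {poly R} :=
  \sum_(k < N.+1) (1 - p) ^+ k.

Section Setup.
(* n >= 1 is the index; the ring of coefficients is Q[a_0, ..., a_{n-1}],
   realised as {mpoly rat[n.-1.+1]} (= n variables when n >= 1), with
   a_i = 'X_i, so that a_{n-1} = 'X_ord_max. *)
Variable n : nat.
Local Notation Rn := {mpoly rat[n.-1.+1]}.

(* a(x) = \sum_i a_i x^i; only a_0..a_{n-1} can influence the coefficient of
   x^(n+1) of (G-H)(1+a(x)x^2) (a_i x^(i+2) has degree >= n+2 for i >= n). *)
Definition aser : {poly Rn} := \sum_(i < n.-1.+1) ('X_i)%:P * 'X^i.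

(* truncation order: enough to get all coefficients up to x^(n+1) exactly *)
Local Notation N := n.+1.

Definition Gser (j : nat) : {poly Rn} :=
  \prod_(i < j) ((1 + aser * 'X^2) * trunc_inv N (1 + (i%:R : Rn) *: 'X)).

(* H(x) = \prod_{i=1-j}^{-1} (1 + i x) / (1 + a(x) x^2); writing i = -k,
   k = 1..j-1  (mod x^(N+1)) *)
Definition Hser (j : nat) : {poly Rn} :=
  \prod_(1 <= k < j) ((1 - (k%:R : Rn) *: 'X) * trunc_inv N (1 + aser * 'X^2)).

(* coefficient of x^(n-1) in (G(x)-H(x))/x^2 * (1 + a(x) x^2), i.e. the
   coefficient of x^(n+1) in (G(x)-H(x)) * (1 + a(x) x^2). *)
Definition lhs_coef (j : nat) : Rn :=
  ((Gser j - Hser j) * (1 + aser * 'X^2))`_n.+1.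

(* S : i |-> S_i(n) in Q[a_0, ..., a_{n-2}] = {mpoly rat[n.-1]}, embedded into
   Q[a_0, ..., a_{n-1}] by mwiden. *)
Definition S_spec (S : nat -> {mpoly rat[n.-1]}) : Prop :=
  forall j : nat, (0 < j)%N ->
    lhs_coef j =
      ((j.*2.-1)%:R : Rn) *
        ('X_ord_max + mwiden (S 0%N)
         + \sum_(1 <= i < n.+1) mwiden (S i) * ((j * j.-1)%:R : Rn) ^+ i).

End Setup.

Definition const_term (m : nat) (p : {mpoly rat[m]}) : rat := p@_0%MM.

From HB Require Import structures.
From mathcomp Require Import all_boot all_order all_algebra.
From mathcomp Require Import mpoly.
From mathcomp Require Import ring zify.
Set Implicit Arguments. Unset Strict Implicit. Unset Printing Implicit Defensive.
Import Order.TTheory GRing.Theory Num.Theory.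
Local Open Scope ring_scope.

(* Only constant terms are involved, and [mcoeff 0] is a ring morphism
   sending every a_i to 0; it maps G and H to G0 = prod_(i<j) 1/(1 + i x) and
   H0 = prod_(k<j) (1 - k x).  Newton's identity m g_m = sum_a u_a g_(m-a)
   expresses the x^m-coefficients g_m of G0 and H0 through the coefficients
   u_a of their logarithmic derivatives, namely (-1)^a p_a(j) and -p_a(j) with
   p_a(j) = sum_(i<j) i^a.  Power sums are polynomials in j (Faulhaber) whose
   j-coefficient is B_a, so every g_m is a polynomial in j whose coefficients
   of j^0, j^1 and j^2 can be read off the recursion.  The identity defining
   the S_i(n) is then an identity of polynomials in j, with right-hand side
   (2j - 1)(S_0 + sum_i S_i (j^2 - j)^i); comparing the coefficients of j^0,
   j^1 and j^2 gives S_{0,0} = 0, S_{1,0} and S_{2,0}, the last one because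
   for odd N, B_a B_(N-a) = 0 unless a or N - a is 1. *)

Section PolyNat.
Variable R : numDomainType.
Implicit Types p q : {poly R}.

Lemma poly_nat_eq k p q : (forall j, (k <= j)%N -> p.[j%:R] = q.[j%:R]) -> p = q.
Proof.
move=> pq; apply/eqP; rewrite -subr_eq0; apply/negP => /negP pq_neq0.
pose xs := [seq (i + k)%:R | i <- iota 0 (size (p - q))] : seq R.
have xs_roots : all (root (p - q)) xs.
  by apply/allP => _ /mapP [i _ ->]; rewrite /root !hornerE pq ?subrr ?leq_addl.
have xs_uniq : uniq xs.
  rewrite map_inj_uniq ?iota_uniq // => a b /eqP.
  by rewrite eqr_nat eqn_add2r => /eqP.
by have := max_poly_roots pq_neq0 xs_roots xs_uniq; rewrite size_map size_iota ltnn.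
Qed.

Lemma shift_invariant_polyC p : p \Po ('X + 1) = p -> p = (p`_0)%:P.
Proof.
move=> pS; apply: (@poly_nat_eq 0) => j _; rewrite hornerC -horner_coef0.
by elim: j => // j IHj; rewrite -natr1 -IHj -[in RHS]pS horner_comp !hornerE.
Qed.

End PolyNat.

Lemma sum_binomial_power_sums (R : comNzRingType) k j :
  \sum_(l < k.+1) 'C(k.+1, l)%:R * \sum_(i < j) (i%:R : R) ^+ l = j%:R ^+ k.+1.
Proof.
have := telescope_sumr (fun i => (i%:R : R) ^+ k.+1) (leq0n j).
rewrite expr0n subr0 big_mkord => <-.
under eq_bigr do rewrite mulr_sumr.
rewrite exchange_big /=; apply: eq_bigr => i _.
rewrite -natr1 exprD1n [in RHS]big_ord_recr /= binn mulr1n addrK.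
by apply: eq_bigr => l _; rewrite mulr_natl.
Qed.

Lemma power_sum_poly_subproof k :
  {p : {poly rat} | forall j, p.[j%:R] = \sum_(i < j) i%:R ^+ k}.
Proof.
elim/ltn_ind: k => k IH.
exists (k.+1%:R^-1 *:
  ('X^(k.+1) - \sum_(l < k) 'C(k.+1, l)%:R *: sval (IH l (ltn_ord l)))) => j.
rewrite hornerZ hornerD hornerN hornerXn horner_sum.
under eq_bigr => l _ do rewrite hornerZ (svalP (IH l (ltn_ord l))).
rewrite -(sum_binomial_power_sums _ k j) big_ord_recr /= binSn.
by rewrite addrAC subrr add0r mulKf // pnatr_eq0.
Qed.

Definition power_sum_poly k := sval (power_sum_poly_subproof k).

Lemma horner_power_sum_poly k j :
  (power_sum_poly k).[j%:R] = \sum_(i < j) i%:R ^+ k.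
Proof. exact: (svalP (power_sum_poly_subproof k)). Qed.

Lemma power_sum_poly_shift k :
  power_sum_poly k \Po ('X + 1) - power_sum_poly k = 'X^k.
Proof.
apply: (@poly_nat_eq _ 0) => j _.
rewrite hornerD hornerN horner_comp !hornerE natr1 !horner_power_sum_poly.
by rewrite big_ord_recr /= addrAC subrr add0r.
Qed.

Lemma horner_power_sum_polyS k (x : rat) :
  (power_sum_poly k).[x + 1] = (power_sum_poly k).[x] + x ^+ k.
Proof.
have := congr1 (horner^~ x) (power_sum_poly_shift k).
by rewrite /= hornerD hornerN horner_comp !hornerE => <-; rewrite addrCA subrr addr0.
Qed.

Lemma coef0_power_sum_poly k : (power_sum_poly k)`_0 = 0.
Proof. by rewrite -horner_coef0 -[0 : rat]/(0%:R) horner_power_sum_poly big_ord0. Qed.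

Lemma sum_binomial_power_sum_poly k :
  \sum_(l < k.+1) 'C(k.+1, l)%:R *: power_sum_poly l = 'X^(k.+1).
Proof.
apply: (@poly_nat_eq _ 0) => j _.
rewrite horner_sum hornerXn -sum_binomial_power_sums.
by apply: eq_bigr => l _; rewrite hornerZ horner_power_sum_poly.
Qed.

Lemma size_bern_upto m : size (bern_upto m) = m.+1.
Proof. by elim: m => [|m IHm] //=; rewrite size_rcons IHm. Qed.

Lemma nth_bern_upto m k : (k <= m)%N -> nth 0 (bern_upto m) k = bernoulli k.
Proof.
elim: m => [|m IHm]; first by rewrite leqn0 => /eqP ->.
rewrite leq_eqVlt => /orP [/eqP -> //| k_lt].
by rewrite /= nth_rcons size_bern_upto k_lt IHm.
Qed.

Lemma bernoulliS m : bernoulli m.+1 =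
  - (\sum_(k < m.+1) 'C(m.+2, k)%:R * bernoulli k) / m.+2%:R.
Proof.
rewrite {1}/bernoulli /= nth_rcons size_bern_upto ltnn eqxx.
by congr (- _ / _); apply: eq_bigr => k _; rewrite nth_bern_upto // -ltnS.
Qed.

Lemma bernoulli1 : bernoulli 1 = - 2^-1.
Proof. by rewrite bernoulliS big_ord1 mul1r. Qed.

Lemma coef1_power_sum_poly k : (power_sum_poly k)`_1 = bernoulli k.
Proof.
elim/ltn_ind: k => -[_|k IH].
  have -> : power_sum_poly 0 = 'X.
    apply: (@poly_nat_eq _ 0) => j _; rewrite horner_power_sum_poly hornerX.
    by under eq_bigr do rewrite expr0; rewrite sumr_const card_ord.
  by rewrite coefX.
have := congr1 (coefp 1) (sum_binomial_power_sum_poly k.+1).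
rewrite /= coef_sum coefXn big_ord_recr /= binSn coefZ.
under eq_bigr => l _ do rewrite coefZ (IH l (ltn_ord l)).
move/eqP; rewrite addr_eq0 => /eqP sumE.
by rewrite bernoulliS sumE opprK mulrC mulKf // pnatr_eq0.
Qed.

Lemma bernoulli_odd k : (1 < k)%N -> odd k -> bernoulli k = 0.
Proof.
move=> k_gt1 k_odd; rewrite -coef1_power_sum_poly.
set p := power_sum_poly k.
(* p(1 - x) - p(x) is 1-periodic, hence constant, so p'(0) = -p'(1) = -p'(0). *)
have dp1 : p^`().[1] = p^`().[0].
  have := congr1 (fun q => q^`().[0]) (power_sum_poly_shift k).
  rewrite /= derivB deriv_comp derivD derivX derivC addr0 mulr1 derivXn.
  rewrite hornerD hornerN horner_comp hornerMn hornerXn !hornerE expr0n.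
  have -> : (k.-1 == 0%N) = false by case: k k_gt1 {k_odd p} => [|[|]].
  by rewrite mul0rn => /eqP; rewrite subr_eq0 => /eqP.
have rp_const : p \Po (1 - 'X) - p = ((p \Po (1 - 'X) - p)`_0)%:P.
  apply: shift_invariant_polyC; apply: (@poly_nat_eq _ 0) => j _.
  rewrite !(horner_comp, hornerE) opprD addrCA subrr addr0 [1 - _]addrC.
  rewrite !horner_power_sum_polyS exprNn -signr_odd k_odd expr1 mulN1r.
  by ring.
have := congr1 (fun q => q^`().[0]) rp_const.
rewrite /= derivC horner0 derivB deriv_comp derivB derivC derivX sub0r mulrN1.
rewrite !(hornerE, horner_comp) ?subr0 dp1 => /eqP.
by rewrite -opprD oppr_eq0 -mulr2n mulrn_eq0 /= horner_coef0 coef_deriv mulr1n => /eqP.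
Qed.

Lemma sum_bernoulli_mul_odd N (w : nat -> rat) : (1 < N)%N -> odd N ->
  \sum_(1 <= a < N) bernoulli a * bernoulli (N - a) * w a
  = bernoulli 1 * bernoulli N.-1 * (w 1%N + w N.-1).
Proof.
case: N => [|[|[|N]]] // _ N_odd.
rewrite big_ltn // big_nat_recr //= big_nat_cond big1 ?add0r => [|a].
  by rewrite subn1 subSS subSn // subnn /=; ring.
rewrite andbT => /andP [a_gt1 a_lt].
have [a_odd|a_even] := boolP (odd a); first by rewrite bernoulli_odd // !mul0r.
rewrite [bernoulli (_ - a)]bernoulli_odd ?mulr0 ?mul0r //; first lia.
by rewrite oddB ?(negbTE a_even) ?addbF //; lia.
Qed.

Lemma coef_Xderiv (R : nzRingType) (p : {poly R}) m : ('X * p^`())`_m = p`_m *+ m.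
Proof. by case: m => [|m]; rewrite coefXM ?mulr0n // coef_deriv. Qed.

Section TruncatedNewton.
Variables (R : comNzRingType) (N : nat).
Implicit Types (c : R) (p q : {poly R}).

Definition eq_upto p q := forall m, (m <= N)%N -> p`_m = q`_m.

Lemma eq_upto_mull r p q : eq_upto p q -> eq_upto (r * p) (r * q).
Proof.
move=> pq m m_le; rewrite !coefM; apply: eq_bigr => i _.
by rewrite pq // (leq_trans (leq_subr _ _) m_le).
Qed.

Lemma eq_upto_add p q p' q' : eq_upto p q -> eq_upto p' q' -> eq_upto (p + p') (q + q').
Proof. by move=> pq pq' m m_le; rewrite !coefD pq ?pq'. Qed.

Lemma eq_upto_newton_coef p u m :
  eq_upto ('X * p^`()) (u * p) -> (m <= N)%N ->
  p`_m *+ m = \sum_(a < m.+1) u`_a * p`_(m - a).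
Proof. by move=> newton m_le; rewrite -coef_Xderiv newton // coefM. Qed.

Lemma newton_prod (I : Type) (r : seq I) (F U : I -> {poly R}) :
  (forall i, eq_upto ('X * (F i)^`()) (U i * F i)) ->
  eq_upto ('X * (\prod_(i <- r) F i)^`()) ((\sum_(i <- r) U i) * \prod_(i <- r) F i).
Proof.
move=> newtonF; elim: r => [|i r IHr]; first by rewrite !big_nil derivC mulr0 mul0r.
rewrite !big_cons derivM mulrDr.
have -> : (U i + \sum_(j <- r) U j) * (F i * \prod_(j <- r) F j)
    = U i * F i * \prod_(j <- r) F j + F i * ((\sum_(j <- r) U j) * \prod_(j <- r) F j).
  by ring.
apply: eq_upto_add; last by rewrite mulrCA; apply: eq_upto_mull.
by rewrite mulrA ![_ * \prod_(j <- r) F j]mulrC; apply: eq_upto_mull.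
Qed.

(* Truncations at degree N of 1/(1 - c x) and of its logarithmic derivative
   x F'/F = c x/(1 - c x). *)
Definition geom_poly c := \poly_(k < N.+1) c ^+ k.
Definition geom_tail c := \poly_(k < N.+1) (c ^+ k *+ (0 < k)%N).

Lemma trunc_inv_linear c : trunc_inv N (1 + c *: 'X) = geom_poly (- c).
Proof.
rewrite /trunc_inv /geom_poly poly_def; apply: eq_bigr => k _.
by rewrite opprD addrA subrr add0r -scaleNr exprZn.
Qed.

Lemma newton_geom_poly c : eq_upto ('X * (geom_poly c)^`()) (geom_tail c * geom_poly c).
Proof.
move=> m m_le; rewrite coefXM coefM; case: m m_le => [|m] m_le /=.
  by rewrite big_ord1 coef_poly /= mulr0n mul0r.
rewrite coef_deriv coef_poly ltnS m_le big_ord_recl coef_poly /= mulr0n mul0r add0r.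
rewrite (eq_bigr (fun _ => c ^+ m.+1)) ?sumr_const ?card_ord // => a _.
rewrite !coef_poly /bump /= add1n ltnS (leq_trans (ltn_ord a) m_le) mulr1n.
by rewrite subSS ltnS (leq_trans (leq_subr a m) (ltnW m_le)) -exprD addSn subnKC // -ltnS.
Qed.

Lemma newton_linear c :
  eq_upto ('X * (1 - c *: 'X)^`()) (- geom_tail c * (1 - c *: 'X)).
Proof.
move=> m m_le.
rewrite derivB derivC derivZ derivX sub0r mulrN -scalerAr mulr1 coefN coefZ coefX.
rewrite mulNr mulrBr mulr1 -scalerAr coefN coefB coefZ coefMX !coef_poly.
case: m m_le => [|[|m]] m_le /=; first by rewrite mulr0 !subrr oppr0.
  by rewrite ltnS m_le expr1 !mulr1n mulr0n mulr0 subr0 mulr1.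
by rewrite mulr0 ltnS m_le ltnS (ltnW m_le) !mulr1n exprS subrr oppr0.
Qed.

End TruncatedNewton.

Section SmallCoefs.
Variable R : nzSemiRingType.
Implicit Types p q : {poly R}.

Lemma coef1M p q : (p * q)`_1 = p`_0 * q`_1 + p`_1 * q`_0.
Proof. by rewrite coefM !big_ord_recr big_ord0 /= add0r. Qed.

Lemma coef2M p q : (p * q)`_2 = p`_0 * q`_2 + p`_1 * q`_1 + p`_2 * q`_0.
Proof. by rewrite coefM !big_ord_recr big_ord0 /= add0r. Qed.

End SmallCoefs.

Section NewtonInterpolation.
Variables (R : numFieldType) (N : nat) (u : nat -> {poly R}) (g : nat -> nat -> R).
Hypotheses (u0 : u 0%N = 0) (g0 : forall j, g 0%N j = 1).
Hypothesis g_newton : forall m j, (0 < m <= N)%N ->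
  g m j *+ m = \sum_(a < m.+1) (u a).[j%:R] * g (m - a)%N j.

Lemma newton_interp_subproof :
  {P : nat -> {poly R} | forall m, (m <= N)%N -> forall j, (P m).[j%:R] = g m j}.
Proof.
suff /(_ N) [P P_g] : forall M, {P : nat -> {poly R} |
    forall m, (m <= M)%N -> (m <= N)%N -> forall j, (P m).[j%:R] = g m j}.
  by exists P => m m_le; apply: P_g.
elim=> [|M [P P_g]].
  by exists (fun=> 1) => m; rewrite leqn0 => /eqP -> _ j; rewrite hornerC g0.
pose p := M.+1%:R^-1 *: \sum_(a < M.+2) u a * P (M.+1 - a)%N.
exists (fun m => if m == M.+1 then p else P m) => m m_le m_leN j.
case: eqP => [m_eq|/eqP m_neq]; last first.
  by apply: P_g; rewrite // -ltnS ltn_neqAle m_neq.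
rewrite {}m_eq in m_leN *; rewrite /p hornerZ horner_sum.
apply: (@mulfI _ M.+1%:R); first by rewrite pnatr_eq0.
rewrite mulrA mulfV ?pnatr_eq0 // mul1r mulr_natl g_newton ?m_leN //.
apply: eq_bigr => a _; rewrite hornerM.
have [->|a_gt0] := posnP a; first by rewrite u0 horner0 !mul0r.
by rewrite P_g //; lia.
Qed.

Definition newton_interp := sval newton_interp_subproof.

Lemma horner_newton_interp m j : (m <= N)%N -> (newton_interp m).[j%:R] = g m j.
Proof. by move=> m_le; apply: (svalP newton_interp_subproof). Qed.

Lemma newton_interp0 : newton_interp 0 = 1.
Proof. by apply: (@poly_nat_eq _ 0) => j _; rewrite horner_newton_interp // hornerC g0. Qed.

Lemma newton_interp_rec m : (0 < m <= N)%N ->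
  newton_interp m *+ m = \sum_(a < m.+1) u a * newton_interp (m - a)%N.
Proof.
move=> /andP [m_gt0 m_le]; apply: (@poly_nat_eq _ 0) => j _.
rewrite hornerMn horner_newton_interp // g_newton ?m_gt0 // horner_sum.
apply: eq_bigr => a _.
by rewrite hornerM horner_newton_interp // (leq_trans (leq_subr _ _) m_le).
Qed.

Hypothesis u_coef0 : forall a, (u a)`_0 = 0.

Lemma coef0_newton_interp m : (m <= N)%N -> (newton_interp m)`_0 = (m == 0)%:R.
Proof.
case: m => [|m] m_le; first by rewrite newton_interp0 coefC.
have : (newton_interp m.+1)`_0 *+ m.+1 = 0.
  rewrite -coefMn newton_interp_rec ?m_le // coef_sum big1 // => a _.
  by rewrite coef0M u_coef0 mul0r.
by move/eqP; rewrite mulrn_eq0 /= => /eqP.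
Qed.

Lemma coef1_newton_interp m : (0 < m <= N)%N ->
  (newton_interp m)`_1 = (u m)`_1 / m%:R.
Proof.
move=> m_bnd; have /andP [m_gt0 m_le] := m_bnd.
apply: (canRL (mulfK _)); first by rewrite pnatr_eq0 -lt0n.
rewrite mulr_natr -coefMn newton_interp_rec // coef_sum big_ord_recr /= subnn newton_interp0.
rewrite mulr1 big1 ?add0r // => -[a a_lt] _ /=.
rewrite coef1M u_coef0 mul0r add0r coef0_newton_interp.
  by rewrite subn_eq0 leqNgt a_lt mulr0.
exact: leq_trans (leq_subr _ _) m_le.
Qed.

Lemma coef2_newton_interp m : (0 < m <= N)%N ->
  (newton_interp m)`_2 *+ m
  = (u m)`_2 + \sum_(a < m) (u a)`_1 * (newton_interp (m - a))`_1.
Proof.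
move=> m_bnd; have /andP [_ m_le] := m_bnd.
rewrite -coefMn newton_interp_rec // coef_sum big_ord_recr /= subnn newton_interp0.
rewrite mulr1 addrC; congr (_ + _); apply: eq_bigr => -[a a_lt] _ /=.
rewrite coef2M u_coef0 mul0r add0r coef0_newton_interp.
  by rewrite subn_eq0 leqNgt a_lt mulr0 addr0.
exact: leq_trans (leq_subr _ _) m_le.
Qed.

End NewtonInterpolation.

(* G and H of the statement with every a_i set to 0; the factor k = 0 of H0
   is 1. *)
Definition G0 N j : {poly rat} := \prod_(i < j) geom_poly N (- i%:R).
Definition H0 j : {poly rat} := \prod_(k < j) (1 - k%:R *: 'X).

(* The x^a-coefficients of x G0'/G0 and x H0'/H0, as polynomials in j. *)
Definition G0_logder a : {poly rat} :=
  if a is 0 then 0 else (-1) ^+ a *: power_sum_poly a.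
Definition H0_logder a : {poly rat} := if a is 0 then 0 else - power_sum_poly a.

Lemma coef0_G0_logder a : (G0_logder a)`_0 = 0.
Proof. by case: a => [|a]; rewrite ?coef0 //= coefZ coef0_power_sum_poly mulr0. Qed.

Lemma coef0_H0_logder a : (H0_logder a)`_0 = 0.
Proof. by case: a => [|a]; rewrite ?coef0 //= coefN coef0_power_sum_poly oppr0. Qed.

Lemma coef_sum_geom_tail N j a : (a <= N)%N ->
  (\sum_(i < j) geom_tail N (- i%:R))`_a = (G0_logder a).[j%:R].
Proof.
move=> a_le; rewrite coef_sum; case: a a_le => [|a] a_le /=.
  by rewrite horner0 big1 // => i _; rewrite coef_poly.
rewrite hornerZ horner_power_sum_poly mulr_sumr; apply: eq_bigr => i _.
by rewrite coef_poly ltnS a_le mulr1n [LHS]exprNn.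
Qed.

Lemma coef_sum_neg_geom_tail N j a : (a <= N)%N ->
  (\sum_(k < j) - geom_tail N k%:R)`_a = (H0_logder a).[j%:R].
Proof.
move=> a_le; rewrite coef_sum; case: a a_le => [|a] a_le /=.
  by rewrite horner0 big1 // => i _; rewrite coefN coef_poly.
rewrite hornerN horner_power_sum_poly -sumrN; apply: eq_bigr => i _.
by rewrite coefN coef_poly ltnS a_le mulr1n.
Qed.

Lemma coef0_G0 N j : (G0 N j)`_0 = 1.
Proof. by rewrite coef0_prod big1 // => i _; rewrite coef_poly expr0. Qed.

Lemma coef0_H0 j : (H0 j)`_0 = 1.
Proof.
by rewrite coef0_prod big1 // => i _; rewrite coefB coefC coefZ coefX mulr0 subr0.
Qed.

Lemma G0_newton N m j : (0 < m <= N)%N ->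
  (G0 N j)`_m *+ m = \sum_(a < m.+1) (G0_logder a).[j%:R] * (G0 N j)`_(m - a).
Proof.
move=> /andP [_ m_le].
have newton := newton_prod (index_enum 'I_j)
  (fun i => newton_geom_poly (R := rat) (N := N) (- i%:R)).
rewrite (eq_upto_newton_coef newton m_le); apply: eq_bigr => a _.
by rewrite coef_sum_geom_tail // (leq_trans _ m_le) // -ltnS.
Qed.

Lemma H0_newton N m j : (0 < m <= N)%N ->
  (H0 j)`_m *+ m = \sum_(a < m.+1) (H0_logder a).[j%:R] * (H0 j)`_(m - a).
Proof.
move=> /andP [_ m_le].
have newton := newton_prod (index_enum 'I_j)
  (fun k => newton_linear (R := rat) (N := N) k%:R).
rewrite (eq_upto_newton_coef newton m_le); apply: eq_bigr => a _.
by rewrite coef_sum_neg_geom_tail // (leq_trans _ m_le) // -ltnS.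
Qed.

Lemma coef1_G0_logder a : (0 < a)%N -> (G0_logder a)`_1 = (-1) ^+ a * bernoulli a.
Proof. by case: a => // a _; rewrite coefZ coef1_power_sum_poly. Qed.

Lemma coef1_H0_logder a : (0 < a)%N -> (H0_logder a)`_1 = - bernoulli a.
Proof. by case: a => // a _; rewrite coefN coef1_power_sum_poly. Qed.

Lemma G0_logder_odd a : odd a -> G0_logder a = H0_logder a.
Proof. by case: a => // a a_odd; rewrite /= -signr_odd a_odd expr1 scaleN1r. Qed.

Section ZeroSeriesPolys.
Variable N : nat.

Definition G0_poly := newton_interp (g := fun m j => (G0 N j)`_m)
  (erefl : G0_logder 0 = 0) (coef0_G0 N) (@G0_newton N).

Definition H0_poly := newton_interp (g := fun m j => (H0 j)`_m)
  (erefl : H0_logder 0 = 0) coef0_H0 (@H0_newton N).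

Lemma horner_G0_poly m j : (m <= N)%N -> (G0_poly m).[j%:R] = (G0 N j)`_m.
Proof. exact: horner_newton_interp. Qed.

Lemma horner_H0_poly m j : (m <= N)%N -> (H0_poly m).[j%:R] = (H0 j)`_m.
Proof. exact: horner_newton_interp. Qed.

Lemma coef0_G0_poly m : (m <= N)%N -> (G0_poly m)`_0 = (m == 0)%:R.
Proof. exact: (coef0_newton_interp _ _ _ coef0_G0_logder). Qed.

Lemma coef0_H0_poly m : (m <= N)%N -> (H0_poly m)`_0 = (m == 0)%:R.
Proof. exact: (coef0_newton_interp _ _ _ coef0_H0_logder). Qed.

Lemma coef1_G0_poly m : (0 < m <= N)%N ->
  (G0_poly m)`_1 = (-1) ^+ m * bernoulli m / m%:R.
Proof.
move=> m_bnd; have /andP [m_gt0 _] := m_bnd.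
by rewrite (coef1_newton_interp _ _ _ coef0_G0_logder m_bnd) coef1_G0_logder.
Qed.

Lemma coef1_H0_poly m : (0 < m <= N)%N -> (H0_poly m)`_1 = - bernoulli m / m%:R.
Proof.
move=> m_bnd; have /andP [m_gt0 _] := m_bnd.
by rewrite (coef1_newton_interp _ _ _ coef0_H0_logder m_bnd) coef1_H0_logder.
Qed.

Lemma coef2_G0_poly m : (0 < m <= N)%N -> (G0_poly m)`_2 *+ m
  = (G0_logder m)`_2 + \sum_(a < m) (G0_logder a)`_1 * (G0_poly (m - a))`_1.
Proof. exact: (coef2_newton_interp _ _ _ coef0_G0_logder). Qed.

Lemma coef2_H0_poly m : (0 < m <= N)%N -> (H0_poly m)`_2 *+ m
  = (H0_logder m)`_2 + \sum_(a < m) (H0_logder a)`_1 * (H0_poly (m - a))`_1.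
Proof. exact: (coef2_newton_interp _ _ _ coef0_H0_logder). Qed.

End ZeroSeriesPolys.


Definition diff_poly N := G0_poly N N - H0_poly N N.

Lemma coef0_diff_poly N : (diff_poly N)`_0 = 0.
Proof. by rewrite coefB coef0_G0_poly // coef0_H0_poly // subrr. Qed.

Lemma coef1_diff_poly N : (0 < N)%N ->
  (diff_poly N)`_1 = ((-1) ^+ N + 1) * bernoulli N / N%:R.
Proof.
move=> N_gt0; have N_bnd : (0 < N <= N)%N by rewrite N_gt0 leqnn.
by rewrite coefB coef1_G0_poly // coef1_H0_poly //; ring.
Qed.

Lemma coef2_diff_poly N : (1 < N)%N -> odd N ->
  (diff_poly N)`_2 = bernoulli N.-1 / N.-1%:R.
Proof.
move=> N_gt1 N_odd; have N_gt0 := ltnW N_gt1.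
have N_bnd : (0 < N <= N)%N by rewrite N_gt0 leqnn.
pose cross a :=
  (G0_logder a)`_1 * (G0_poly N (N - a))`_1 - (H0_logder a)`_1 * (H0_poly N (N - a))`_1.
have crossE a : (0 < a < N)%N -> cross a = -2 * (bernoulli a * bernoulli (N - a) * (N - a)%:R^-1).
  move=> /andP [a_gt0 a_lt].
  have Na_bnd : (0 < N - a <= N)%N by rewrite subn_gt0 a_lt leq_subr.
  rewrite /cross coef1_G0_logder // coef1_H0_logder // coef1_G0_poly // coef1_H0_poly //.
  rewrite -signr_odd -[(-1) ^+ (N - a)]signr_odd oddB ?(ltnW a_lt) // N_odd.
  by case: (odd a); rewrite /= ?expr1 ?expr0; ring.
apply: (@mulIf _ N%:R); first by rewrite pnatr_eq0 -lt0n.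
rewrite mulr_natr coefB mulrnBl coef2_G0_poly // coef2_H0_poly // G0_logder_odd //.
rewrite opprD addrACA subrr add0r -sumrB -(big_mkord xpredT cross) big_ltn //.
rewrite {1}/cross /= coef0 !mul0r subrr add0r (eq_big_nat _ _ crossE) -mulr_sumr.
rewrite sum_bernoulli_mul_odd // subn1 bernoulli1.
have -> : (N - N.-1)%N = 1%N by lia.
have -> : N%:R = N.-1%:R + 1 :> rat by rewrite natr1 prednK.
by field; rewrite pnatr_eq0 -lt0n -ltnS prednK.
Qed.

Lemma coef_XXsub1_exp (R : comNzRingType) i k :
  (('X * ('X - 1)) ^+ i : {poly R})`_k = if (k < i)%N then 0 else (('X - 1) ^+ i)`_(k - i).
Proof. by rewrite exprMn coefXnM. Qed.

Section RhsPoly.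
Variables (d : nat) (c : nat -> rat).

Definition rhs_Q : {poly rat} :=
  (c 0%N)%:P + \sum_(1 <= i < d.+1) c i *: ('X * ('X - 1)) ^+ i.
Definition rhs_poly : {poly rat} := ('X *+ 2 - 1) * rhs_Q.

Lemma horner_rhs_poly j : (0 < j)%N -> rhs_poly.[j%:R]
  = (j.*2.-1)%:R * (c 0%N + \sum_(1 <= i < d.+1) c i * (j * j.-1)%:R ^+ i).
Proof.
move=> j_gt0; rewrite /rhs_poly /rhs_Q hornerM; congr (_ * _).
  by rewrite !hornerE -subn1 natrB ?double_gt0 // -addnn natrD.
rewrite hornerD hornerC horner_sum; congr (_ + _); apply: eq_bigr => i _.
by rewrite hornerZ horner_exp !hornerE natrM -subn1 natrB.
Qed.

Lemma coef0_rhs_Q : rhs_Q`_0 = c 0%N.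
Proof.
rewrite coefD coefC coef_sum big_nat_cond big1 ?addr0 // => i /andP [/andP [i_gt0 _] _].
by rewrite coefZ coef_XXsub1_exp i_gt0 mulr0.
Qed.

Lemma coef1_rhs_Q : (0 < d)%N -> rhs_Q`_1 = - c 1%N.
Proof.
move=> d_gt0; rewrite coefD coefC add0r coef_sum big_ltn ?ltnS //.
rewrite big_nat_cond big1 ?addr0 => [|i /andP [/andP [i_gt1 _] _]].
  by rewrite coefZ coef_XXsub1_exp subnn expr1 coefB coefX coefC sub0r mulrN1.
by rewrite coefZ coef_XXsub1_exp i_gt1 mulr0.
Qed.

Lemma coef2_rhs_Q : (1 < d)%N -> rhs_Q`_2 = c 1%N + c 2%N.
Proof.
move=> d_gt1; rewrite coefD coefC add0r coef_sum big_ltn ?ltnS; last exact: ltnW.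
rewrite big_ltn ?ltnS // big_nat_cond big1 ?addr0 => [|i /andP [/andP [i_gt2 _] _]].
  rewrite !coefZ !coef_XXsub1_exp ltnn [(2 < 1)%N]/= [(2 - 1)%N]/= subnn expr1.
  rewrite coefB coefX coefC subr0 mulr1 -horner_coef0 horner_exp hornerD hornerN hornerX hornerC.
  by rewrite sub0r sqrrN expr1n mulr1.
by rewrite coefZ coef_XXsub1_exp i_gt2 mulr0.
Qed.

Lemma rhs_polyE : rhs_poly = ('X * rhs_Q) *+ 2 - rhs_Q.
Proof. by rewrite /rhs_poly mulrBl mul1r mulrnAl. Qed.

Lemma coef0_rhs_poly : rhs_poly`_0 = - c 0%N.
Proof. by rewrite rhs_polyE coefB coefMn coefXM mul0rn sub0r coef0_rhs_Q. Qed.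

Lemma coefS_rhs_poly k : rhs_poly`_k.+1 = rhs_Q`_k *+ 2 - rhs_Q`_k.+1.
Proof. by rewrite rhs_polyE coefB coefMn coefXM. Qed.

Lemma coef1_rhs_poly : (0 < d)%N -> rhs_poly`_1 = c 0%N *+ 2 + c 1%N.
Proof. by move=> d_gt0; rewrite coefS_rhs_poly coef0_rhs_Q coef1_rhs_Q // opprK. Qed.

Lemma coef2_rhs_poly : (1 < d)%N -> rhs_poly`_2 = - (c 1%N *+ 3) - c 2%N.
Proof.
move=> d_gt1; rewrite coefS_rhs_poly coef1_rhs_Q ?(ltnW d_gt1) // coef2_rhs_Q //.
by rewrite -mulNrn opprD addrA -mulrSr.
Qed.

End RhsPoly.

Lemma map_trunc_inv (R S : comNzRingType) (f : {rmorphism R -> S}) N (p : {poly R}) :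
  map_poly f (trunc_inv N p) = trunc_inv N (map_poly f p).
Proof.
rewrite /trunc_inv rmorph_sum; apply: eq_bigr => k _.
by rewrite rmorphXn rmorphB rmorph1.
Qed.

Lemma trunc_inv1 (R : comNzRingType) N : trunc_inv N (1 : {poly R}) = 1.
Proof.
by rewrite /trunc_inv subrr big_ord_recl expr0 big1 ?addr0 // => i _; rewrite expr0n.
Qed.

Section ConstantTerms.
Variable n : nat.
Local Notation Rn := {mpoly rat[n.-1.+1]}.
Local Notation ev := (mcoeff 0%MM : Rn -> rat).

Lemma map_aser_X2 : map_poly ev (1 + aser n * 'X^2) = 1.
Proof.
rewrite rmorphD rmorph1 rmorphM /= rmorph_sum big1 ?mul0r ?addr0 // => i _.
by rewrite rmorphM /= map_polyC /= mcoeffX mnm1_eq0 mul0r.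
Qed.

Lemma map_Gser j : map_poly ev (Gser n j) = G0 n.+1 j.
Proof.
rewrite rmorph_prod; apply: eq_bigr => i _.
rewrite rmorphM /= map_aser_X2 mul1r map_trunc_inv rmorphD rmorph1 /=.
by rewrite map_polyZ map_polyX rmorph_nat trunc_inv_linear.
Qed.

Lemma map_Hser j : map_poly ev (Hser n j) = H0 j.
Proof.
rewrite rmorph_prod /H0.
under eq_bigr do rewrite rmorphM /= map_trunc_inv map_aser_X2 trunc_inv1 mulr1 rmorphB
  rmorph1 /= map_polyZ map_polyX rmorph_nat.
case: j => [|j]; first by rewrite big_geq // big_ord0.
by rewrite -(big_mkord xpredT (fun k => 1 - k%:R *: 'X)) [RHS]big_ltn // scale0r subr0 mul1r.
Qed.

Lemma S_spec_diff_poly (S : nat -> {mpoly rat[n.-1]}) :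
  S_spec S -> diff_poly n.+1 = rhs_poly n (fun i => const_term (S i)).
Proof.
move=> HS; apply: (@poly_nat_eq _ 1) => j j_gt0.
rewrite hornerD hornerN horner_G0_poly // horner_H0_poly // horner_rhs_poly //.
have := congr1 ev (HS j j_gt0).
rewrite /lhs_coef -coef_map rmorphM rmorphB /= map_Gser map_Hser map_aser_X2 mulr1 coefB => ->.
have ev_mwiden (p : {mpoly rat[n.-1]}) : ev (mwiden p) = const_term p.
  by rewrite /const_term -mnmwiden0 mwiden_mnmwiden.
rewrite rmorphM rmorph_nat !rmorphD /= mcoeffX mnm1_eq0 add0r ev_mwiden rmorph_sum.
congr (_ * (_ + _)); apply: eq_bigr => i _.
by rewrite rmorphM /= ev_mwiden rmorphXn rmorph_nat.
Qed.


End ConstantTerms.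

Section SpecConstantTerms.
Variables (n : nat) (S : nat -> {mpoly rat[n.-1]}).
Hypothesis HS : S_spec S.

Lemma S_spec_const_term0 : const_term (S 0%N) = 0.
Proof.
have := congr1 (coefp 0) (S_spec_diff_poly HS).
by rewrite /= coef0_diff_poly coef0_rhs_poly => /eqP; rewrite eq_sym oppr_eq0 => /eqP.
Qed.

Lemma S_spec_const_term1 : (0 < n)%N ->
  const_term (S 1%N) = ((-1) ^+ n.+1 + 1) * bernoulli n.+1 / n.+1%:R.
Proof.
move=> n_gt0; have := congr1 (coefp 1) (S_spec_diff_poly HS).
by rewrite /= coef1_diff_poly // coef1_rhs_poly // S_spec_const_term0 mul0rn add0r => <-.
Qed.

Lemma S_spec_const_term2 : (1 < n)%N -> ~~ odd n ->
  const_term (S 2%N) = - bernoulli n / n%:R.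
Proof.
move=> n_gt1 n_even; have := congr1 (coefp 2) (S_spec_diff_poly HS).
rewrite /= coef2_diff_poly ?ltnS ?(ltnW n_gt1) //= coef2_rhs_poly //.
rewrite S_spec_const_term1 ?(ltnW n_gt1) // -signr_odd /= n_even expr1 addNr.
rewrite !mul0r mul0rn oppr0 sub0r => /eqP; rewrite eq_sym eqr_oppLR => /eqP ->.
by rewrite mulNr.
Qed.

End SpecConstantTerms.

Unset Implicit Arguments.
Theorem proposition4p6 (n : nat) (hn : (1 <= n)%N) :
  (forall S : nat -> {mpoly rat[(n.*2).-1]}, S_spec S ->
     const_term (S 1%N) = 0
     /\ const_term (S 2%N) = - bernoulli n.*2 / (n.*2)%:R)
  /\ (forall S : nat -> {mpoly rat[(n.*2).-1.-1]}, S_spec S ->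
     const_term (S 1%N) = bernoulli n.*2 / n%:R).
Proof.
have n2_gt1 : (1 < n.*2)%N by rewrite -addnn; lia.
have n2_pred_gt0 : (0 < (n.*2).-1)%N by rewrite -ltnS prednK // ltnW.
split=> S HS.
  split; last by apply: S_spec_const_term2; rewrite ?odd_double.
  by rewrite (S_spec_const_term1 HS (ltnW n2_gt1)) -signr_odd /= odd_double addNr !mul0r.
rewrite (S_spec_const_term1 HS n2_pred_gt0) prednK ?(ltnW n2_gt1) //.
rewrite -signr_odd odd_double -muln2 natrM.
by field; rewrite pnatr_eq0 -lt0n.
Qed.
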